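(* Let $x_1\ge\cdots\ge x_n$ and $y_1\ge\cdots\ge y_n$ be reals such that $\{x_i\}$ majorizes $\{y_i\}$. Suppose that in the negative-fill variable-processor cup game there is a filler move on the state $\{y_i\}$ such that after greedy emptying the state becomes $\{y_i'\}$. Then there is a filler move on the state $\{x_i\}$ (possibly with a different number of processors $p$) such that after greedy emptying the state becomes some $\{x_i'\}$ which majorizes $\{y_i'\}$.
   Context: For sequences $x_1\ge\cdots\ge x_n$ and $y_1\ge\cdots\ge y_n$ with $\sum_i x_i=\sum_i y_i$, $\{x_i\}$ majorizes $\{y_i\}$ if $\sum_{i=1}^m x_i\ge\sum_{i=1}^m y_i$ for every $m\le n$; for unsorted sequences this is applied after sorting. Negative-fill variable-processor cup game: a filler move chooses an integer $1\le p\le n$ and reals $a_i\in[0,1]$ with $\sum a_i=p$ and adds $a_i$ to cup $i$; greedy emptying then subtracts exactly $1$ from each of the $p$ cups with largest fill (fills may become negative). *)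

From HB Require Import structures.
From mathcomp Require Import all_boot all_order all_algebra.
From mathcomp Require Import reals.
Set Implicit Arguments. Unset Strict Implicit. Unset Printing Implicit Defensive.
Import Order.TTheory GRing.Theory Num.Theory.
Local Open Scope ring_scope.

Section CupGame.
Variables (R : realType) (n : nat).

Definition nonincreasing (x : 'I_n -> R) : Prop :=
  forall i j : 'I_n, (i <= j)%N -> x j <= x i.

Definition sort_desc (x : 'I_n -> R) : seq R :=
  sort (fun a b : R => b <= a) [seq x i | i <- enum 'I_n].

Definition majorizes (x y : 'I_n -> R) : Prop :=
  \sum_(i < n) x i = \sum_(i < n) y i /\
  forall m : nat, (m <= n)%N ->
    \sum_(v <- take m (sort_desc y)) v <= \sum_(v <- take m (sort_desc x)) v.

Definition filler_move (p : nat) (a : 'I_n -> R) : Prop :=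
  [/\ (1 <= p)%N, (p <= n)%N,
      forall i, 0 <= a i /\ a i <= 1
    & \sum_(i < n) a i = p%:R].

Definition greedy_empty (p : nat) (z z' : 'I_n -> R) : Prop :=
  exists S : {set 'I_n},
    [/\ #|S| = p,
        forall i j, i \in S -> j \notin S -> z j <= z i
      & forall i, z' i = z i - (i \in S)%:R].

Definition game_step (z z' : 'I_n -> R) : Prop :=
  exists (p : nat) (a : 'I_n -> R),
    filler_move p a /\ greedy_empty p (fun i => z i + a i) z'.

End CupGame.

(* Write excess w t = \sum_i (w_i - t)^+.  Majorization is equivalent to equal
   totals plus excess y t <= excess x t for every t.
   Let lo + 1 be the smallest fill of a cup emptied by the greedy round on y.
   Then every cup of y moves toward the band [lo, lo + 1]: emptied cups go down
   but stay >= lo, the others go up but stay <= lo + 1.  So excess y' t <=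
   excess y t for t >= lo + 1, and symmetrically for the deficit
   \sum_i (t - y_i)^+ when t <= lo.
   On x the filler only rearranges the cups lying inside the band, pouring
   their total band mass into the highest ones (water filling); a single round
   achieves this because the lowered cups are exactly those greedy empties.
   Outside the band nothing changes, and inside it the water-filled profile is
   the most concentrated one, which dominates y' for t in [lo, lo + 1]. *)

From HB Require Import structures.
From mathcomp Require Import all_boot all_order all_algebra.
From mathcomp Require Import reals lra.
Import Order.TTheory GRing.Theory Num.Theory.
Local Open Scope ring_scope.
Set Implicit Arguments. Unset Strict Implicit. Unset Printing Implicit Defensive.

Section PositivePartAndClipping.
Variable R : realDomainType.
Implicit Types (s : seq R) (a t u v lo : R).

Definition pos v := Num.max v 0.

Variant pos_spec v : R -> Type :=
  | PosNonneg of 0 <= v : pos_spec v v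
  | PosNeg of v < 0 : pos_spec v 0.

Lemma posP v : pos_spec v (pos v).
Proof. by rewrite /pos maxElt; case: ltP => h; constructor. Qed.

Lemma pos_ge0 v : 0 <= pos v.
Proof. by case: posP => // /ltW. Qed.

Lemma le_pos v : v <= pos v.
Proof. by case: posP => // /ltW. Qed.

Lemma pos_le0 v : v <= 0 -> pos v = 0.
Proof. by case: posP => // h h'; apply/eqP; rewrite eq_le h' h. Qed.

Lemma pos_id v : 0 <= v -> pos v = v.
Proof. by case: posP => // h h'; apply/eqP; rewrite eq_le h' ltW. Qed.

Lemma pos_le u v : u <= v -> pos u <= pos v.
Proof. by case: (posP u) => ?; case: (posP v) => ? ?; lra. Qed.

Lemma pos_subr u v : pos (u - v) = u - v + pos (v - u).
Proof. by case: (posP (u - v)) => ?; case: (posP (v - u)) => ?; lra. Qed.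

Definition clip lo v := Num.min (Num.max v lo) (lo + 1).

Variant clip_spec lo v : R -> Type :=
  | ClipBelow of v < lo : clip_spec lo v lo
  | ClipAbove of lo + 1 < v : clip_spec lo v (lo + 1)
  | ClipInside of lo <= v & v <= lo + 1 : clip_spec lo v v.

Lemma clipP lo v : clip_spec lo v (clip lo v).
Proof.
rewrite /clip maxElt minEle; case: (ltP v lo) => [vlo|lov].
  by rewrite ifT; [constructor | lra].
by case: leP => [vhi|hiv]; constructor.
Qed.

Lemma clip_bounds lo v : lo <= clip lo v <= lo + 1.
Proof. by case: clipP => *; apply/andP; split; lra. Qed.

Lemma clip_id lo v : lo <= v <= lo + 1 -> clip lo v = v.
Proof. by case/andP; case: clipP => //; lra. Qed.

Lemma pos_clip_split lo v t : lo <= t <= lo + 1 ->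
  pos (v - t) = pos (v - (lo + 1)) + pos (clip lo v - t).
Proof.
case/andP=> lo_t t_hi; case: (posP (v - t)) => ?; case: (posP (v - (lo + 1))) => ?.
- by case: clipP => *; rewrite pos_id; lra.
- by case: clipP => *; rewrite ?pos_id ?pos_le0; lra.
- by lra.
- by case: clipP => *; rewrite pos_le0; lra.
Qed.

Lemma clip_add_pos lo v : clip lo v - lo + pos (v - (lo + 1)) = v - lo + pos (lo - v).
Proof.
by case: clipP => *; case: (posP (v - (lo + 1))) => ?; case: (posP (lo - v)) => ?; lra.
Qed.

Lemma sumr_const_seq s t : \sum_(v <- s) t = (size s)%:R * t.
Proof.
elim: s => [|v s IH]; first by rewrite big_nil mul0r.
by rewrite big_cons IH -natr1 mulrDl mul1r addrC.
Qed.

Lemma sum_take_le_pos s m t : (m <= size s)%N ->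
  \sum_(v <- take m s) v <= m%:R * t + \sum_(v <- s) pos (v - t).
Proof.
elim: s m => [|v s IH] [|m] //= hm.
- by rewrite !big_nil; lra.
- by rewrite big_nil mul0r add0r; apply: sumr_ge0 => w _; apply: pos_ge0.
- rewrite !big_cons; have := IH m hm; have := le_pos (v - t); rewrite -natr1; lra.
Qed.

Lemma sum_pos_sorted s m t : sorted >=%R s -> (m <= size s)%N ->
  (forall i, (i < m)%N -> t <= s`_i) -> ((m < size s)%N -> s`_m <= t) ->
  \sum_(v <- s) pos (v - t) = \sum_(v <- take m s) v - m%:R * t.
Proof.
move=> s_sorted ms top bot; rewrite -[in LHS](cat_take_drop m s) big_cat /=.
rewrite [X in _ + X]big1_seq ?addr0; last first.
  move=> w /andP[_ /(nthP 0)[i]]; rewrite size_drop nth_drop => hi <-.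
  have mi : (m < size s)%N by rewrite -subn_gt0 (leq_ltn_trans _ hi).
  apply/pos_le0; rewrite subr_le0 (le_trans _ (bot mi)) //.
  apply: (sorted_leq_nth (rev_trans le_trans) lexx) => //; rewrite ?inE ?leq_addr //.
  by rewrite -ltn_subRL.
rewrite -[m in m%:R](size_takel ms) -sumr_const_seq -sumrB.
rewrite [in RHS]big_seq [in LHS]big_seq; apply: eq_bigr => w /(nthP 0)[i].
rewrite size_takel // => hi <-; rewrite nth_take // pos_id //.
by rewrite subr_ge0 top.
Qed.

Lemma sum_clip0 a j : 0 <= a -> \sum_(k < j) clip 0 (a - k%:R) = Num.min j%:R a.
Proof.
move=> a_ge0; elim: j => [|j IH]; first by rewrite big_ord0 min_l.
rewrite big_ord_recr /= IH -natr1.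
by case: (leP j%:R a); case: (leP (j%:R + 1) a); case: clipP; lra.
Qed.

End PositivePartAndClipping.

Section Excess.
Variables (R : realDomainType) (I : finType).
Implicit Types (w x y : I -> R) (t lo : R).

Definition excess w t := \sum_i pos (w i - t).
Definition deficit w t := \sum_i pos (t - w i).
Definition band_mass lo w := \sum_i (clip lo (w i) - lo).
Definition band_excess lo w t := \sum_i pos (clip lo (w i) - t).

Definition moves_toward lo y y' :=
  forall i, lo <= y' i <= y i \/ y i <= y' i <= lo + 1.

Definition moves_within lo x x' :=
  forall i, x' i = x i \/ (lo <= x i <= lo + 1) /\ (lo <= x' i <= lo + 1).

(* The band part of w has the largest excess its mass allows, cf. band_excess_le. *)
Definition band_packed lo w := forall t (j : nat), (j <= #|I|)%N ->
  Num.min j%:R (band_mass lo w) - j%:R * (t - lo) <= band_excess lo w t.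

Lemma excess_deficit w t : excess w t = \sum_i w i - #|I|%:R * t + deficit w t.
Proof.
rewrite /excess /deficit; under eq_bigr do rewrite pos_subr.
by rewrite big_split /= sumrB sumr_const mulr_natl.
Qed.

Lemma excess_band_split lo w t : lo <= t <= lo + 1 ->
  excess w t = excess w (lo + 1) + band_excess lo w t.
Proof.
by move=> t_band; rewrite -big_split; apply: eq_bigr => i _; apply: pos_clip_split.
Qed.

Lemma band_mass_excess lo w :
  band_mass lo w + excess w (lo + 1) = \sum_i w i - #|I|%:R * lo + deficit w lo.
Proof.
rewrite -big_split /=; under eq_bigr do rewrite clip_add_pos.
by rewrite big_split /= sumrB sumr_const mulr_natl.
Qed.

Lemma band_mass_bounds lo w : 0 <= band_mass lo w <= #|I|%:R.
Proof.
apply/andP; split; first by apply: sumr_ge0 => i _; have := clip_bounds lo (w i); lra.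
rewrite -sumr_const; apply: ler_sum => i _; have := clip_bounds lo (w i); lra.
Qed.

Lemma band_excess_le lo w t : exists2 j, (j <= #|I|)%N &
  band_excess lo w t + j%:R * (t - lo) <= Num.min j%:R (band_mass lo w).
Proof.
pose J := [pred i | t < clip lo (w i)].
exists #|J|; first exact: max_card.
have -> : band_excess lo w t + #|J|%:R * (t - lo) = \sum_(i in J) (clip lo (w i) - lo).
  have outside : \sum_(i | i \notin J) pos (clip lo (w i) - t) = 0.
    by apply: big1 => i; rewrite inE -leNgt => ?; apply: pos_le0; lra.
  rewrite /band_excess (bigID (mem J)) /= outside addr0.
  rewrite [RHS](eq_bigr (fun i => pos (clip lo (w i) - t) + (t - lo))) => [|i].
    by rewrite big_split /= sumr_const mulr_natl.
  by rewrite inE => ?; rewrite pos_id; lra.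
rewrite le_min; apply/andP; split.
  rewrite -[X in _ <= X]sumr_const; apply: ler_sum => i _.
  by have := clip_bounds lo (w i); lra.
rewrite [X in _ <= X](bigID (mem J)) /= lerDl; apply: sumr_ge0 => i _.
by have := clip_bounds lo (w i); lra.
Qed.

Lemma excess_moves_toward lo y y' t : moves_toward lo y y' -> lo + 1 <= t ->
  excess y' t <= excess y t.
Proof.
move=> yy' ht; apply: ler_sum => i _.
case: (yy' i) => /andP[? ?]; first by apply: pos_le; lra.
by rewrite pos_le0 ?pos_ge0 //; lra.
Qed.

Lemma deficit_moves_toward lo y y' t : moves_toward lo y y' -> t <= lo ->
  deficit y' t <= deficit y t.
Proof.
move=> yy' ht; apply: ler_sum => i _.
case: (yy' i) => /andP[? ?]; last by apply: pos_le; lra.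
by rewrite pos_le0 ?pos_ge0 //; lra.
Qed.

Lemma moves_within_toward lo x x' : moves_within lo x x' -> moves_toward lo x x'.
Proof.
move=> xx' i; case: (xx' i) => [->|[/andP[? ?] /andP[? ?]]].
  by case: (lerP lo (x i)) => ?; [left | right]; rewrite lexx; lra.
by case: (lerP (x' i) (x i)) => ?; [left | right]; apply/andP; split; lra.
Qed.

Lemma moves_within_sym lo x x' : moves_within lo x x' -> moves_within lo x' x.
Proof. by move=> xx' i; case: (xx' i) => [->|[]]; [left | right]. Qed.

Lemma excess_le_in_band lo w w' t : lo <= t <= lo + 1 -> \sum_i w i = \sum_i w' i ->
  excess w (lo + 1) <= excess w' (lo + 1) -> deficit w lo <= deficit w' lo ->
  band_packed lo w' -> excess w t <= excess w' t.
Proof.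
move=> t_band sum_eq above below packed; rewrite !(excess_band_split _ t_band).
have [j jI w_le] := band_excess_le lo w t.
have := packed t j jI; have := band_mass_excess lo w; have := band_mass_excess lo w'.
by move: w_le; case: (leP j%:R (band_mass lo w)); case: (leP j%:R (band_mass lo w')); lra.
Qed.

Lemma excess_le_moves lo x y x' y' :
  moves_toward lo y y' -> moves_within lo x x' -> band_packed lo x' ->
  \sum_i y' i = \sum_i y i -> \sum_i x' i = \sum_i x i -> \sum_i x i = \sum_i y i ->
  (forall t, excess y t <= excess x t) -> forall t, excess y' t <= excess x' t.
Proof.
move=> yy' xx' packed sy sx sxy dom.
have x'x := moves_within_toward (moves_within_sym xx').
have above t : lo + 1 <= t -> excess y' t <= excess x' t.
  move=> ht; apply: le_trans (excess_moves_toward yy' ht) _.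
  exact: le_trans (dom t) (excess_moves_toward x'x ht).
have below t : t <= lo -> deficit y' t <= deficit x' t.
  move=> ht; apply: le_trans (deficit_moves_toward yy' ht) _.
  apply: le_trans _ (deficit_moves_toward x'x ht).
  by have := dom t; rewrite !excess_deficit sxy; lra.
move=> t; case: (lerP (lo + 1) t) => [|t_hi]; first exact: above.
case: (lerP t lo) => [t_lo|lo_t].
  by have := below t t_lo; rewrite !excess_deficit sx sy sxy; lra.
apply: excess_le_in_band; rewrite ?above ?below ?sy ?sx ?sxy //.
by apply/andP; split; lra.
Qed.

End Excess.

Lemma sumr_indicator (R : pzSemiRingType) (I : finType) (S : {set I}) :
  \sum_i ((i \in S)%:R : R) = #|S|%:R.
Proof. by rewrite -sumr_const [RHS]big_mkcond; apply: eq_bigr => i _; case: (i \in S). Qed.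

Section CupGame.
Variables (R : realType) (n : nat).
Implicit Types (u v x y : 'I_n -> R) (t lo : R).

Lemma sort_desc_sorted v : sorted >=%R (sort_desc v).
Proof. by apply: sort_sorted => a b; apply: le_total. Qed.

Lemma size_sort_desc v : size (sort_desc v) = n.
Proof. by rewrite size_sort size_map size_enum_ord. Qed.

Lemma sum_sort_desc_pos v t : \sum_(w <- sort_desc v) pos (w - t) = excess v t.
Proof. by rewrite (perm_big _ (permEl (perm_sort _ _))) big_map big_enum. Qed.

Lemma majorizesP u v : majorizes u v <->
  \sum_i u i = \sum_i v i /\ forall t, excess v t <= excess u t.
Proof.
have ge_sorted_nth (s : seq R) i j : sorted >=%R s -> (i <= j < size s)%N -> s`_j <= s`_i.
  move=> s_sorted /andP[ij js].
  by apply: (sorted_leq_nth (rev_trans le_trans) lexx) => //; rewrite inE (leq_ltn_trans ij).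
split=> [[sum_eq top] | [sum_eq dom]]; split=> //; [move=> t | move=> m mn].
  set s := sort_desc v; set m := find (< t) s.
  have mn : (m <= n)%N by rewrite -(size_sort_desc v) find_size.
  rewrite -sum_sort_desc_pos (@sum_pos_sorted _ _ m _ (sort_desc_sorted v)) ?size_sort_desc //.
  - rewrite -sum_sort_desc_pos lerBlDr (le_trans (top m mn)) //.
    by rewrite addrC sum_take_le_pos ?size_sort_desc.
  - by move=> i /(before_find 0) /negbT; rewrite -leNgt.
  - move=> mlt; have has_lt : has (< t) s by rewrite has_find size_sort_desc.
    exact: ltW (nth_find 0 has_lt).
case: m mn => [|m] mn; first by rewrite !take0 !big_nil.
set s := sort_desc u; pose t := s`_m.
have ms : (m.+1 <= size s)%N by rewrite size_sort_desc.
apply: le_trans (sum_take_le_pos t _) _; first by rewrite size_sort_desc.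
rewrite sum_sort_desc_pos -lerBrDl (le_trans (dom t)) // -sum_sort_desc_pos.
rewrite (sum_pos_sorted (sort_desc_sorted u) ms) // => [i im | ms'].
  by apply: ge_sorted_nth; rewrite ?sort_desc_sorted // -ltnS im.
by apply: ge_sorted_nth; rewrite ?sort_desc_sorted ?leqnSn.
Qed.

Lemma game_step_dim_gt0 y y' : game_step y y' -> (0 < n)%N.
Proof. by case=> p [a [[p_gt0 pn _ _] _]]; apply: leq_trans p_gt0 pn. Qed.

Lemma game_step_sum y y' : game_step y y' -> \sum_i y' i = \sum_i y i.
Proof.
case=> p [a [[_ _ _ sum_a] [S [cardS _ y'E]]]].
by rewrite (eq_bigr _ (fun i _ => y'E i)) sumrB big_split /= sum_a sumr_indicator cardS addrK.
Qed.

Lemma game_step_moves_toward y y' : game_step y y' -> exists lo, moves_toward lo y y'.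
Proof.
case=> p [a [[p_gt0 _ a01 _] [S [cardS greedy y'E]]]].
have [i0 i0S] : exists i0, i0 \in S by apply/set0Pn; rewrite -card_gt0 cardS.
have [i1 i1S min_i1] := @arg_minP _ R _ i0 (mem S) (fun i => y i + a i) i0S.
exists (y i1 + a i1 - 1) => k; have [a0 a1] := a01 k; rewrite y'E.
case: (boolP (k \in S)) => kS.
  by have := min_i1 k kS; left; rewrite mulr1n; apply/andP; split; lra.
by have := greedy i1 k i1S kS; right; rewrite mulr0n; apply/andP; split; lra.
Qed.

Lemma game_step_ext x x' : (0 < n)%N -> x' =1 x -> game_step x x'.
Proof.
move=> n_gt0 x'x; exists n, (fun=> 1); split.
  by split=> //; rewrite sumr_const card_ord.
exists setT; split=> [|i j _|i]; rewrite ?cardsT ?card_ord ?inE //= x'x; lra.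
Qed.

Lemma moves_within_game_step lo x x' : (0 < n)%N -> moves_within lo x x' ->
  \sum_i x' i = \sum_i x i -> game_step x x'.
Proof.
move=> n_gt0 xx' sum_eq; pose S := [set k | (x' k <= x k) && (lo <= x' k)].
have [S0 | S_neq0] := eqVneq S set0.
  have x_le k : 0 <= x' k - x k.
    have : k \notin S by rewrite S0 inE.
    rewrite inE negb_and -!ltNge.
    by case: (xx' k) => [->|[/andP[? ?] /andP[? ?]]] /orP[]; lra.
  have x'x k : x' k - x k = 0.
    by apply: (@psumr_eq0P _ _ predT _ (fun k _ => x_le k)); rewrite // sumrB sum_eq subrr.
  by apply: game_step_ext => // k; apply/eqP; rewrite -subr_eq0 x'x.
exists #|S|, (fun k => x' k - x k + (k \in S)%:R); split.
  split.
  - by rewrite card_gt0.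
  - by rewrite -[X in (_ <= X)%N](card_ord n) max_card.
  - move=> k; case: (boolP (k \in S)); rewrite inE => /= kS; rewrite ?mulr1n ?mulr0n.
      by case/andP: kS; case: (xx' k) => [->|[/andP[? ?] /andP[? ?]]]; split; lra.
    move: kS; rewrite negb_and -!ltNge.
    by case: (xx' k) => [->|[/andP[? ?] /andP[? ?]]] /orP[]; split; lra.
  - by rewrite big_split /= sumrB sum_eq subrr add0r sumr_indicator.
exists S; split=> // [i j | i]; last by rewrite /=; lra.
move=> iS jS; rewrite iS (negbTE jS) mulr1n mulr0n.
move: iS jS; rewrite !inE negb_and -!ltNge => /andP[? ?].
by case: (xx' j) => [->|[/andP[? ?] /andP[? ?]]] /orP[]; lra.
Qed.

Lemma sum_prefix_const j (c : R) : (j <= n)%N -> \sum_(k < n | (k < j)%N) c = j%:R * c.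
Proof. by move=> jn; rewrite -(big_ord_widen n (fun=> c) jn) sumr_const card_ord mulr_natl. Qed.

Section Refill.
Variables (lo : R) (x : 'I_n -> R).

Definition fill (k : 'I_n) := lo + clip 0 (band_mass lo x - k%:R).
Definition refill k := x k - clip lo (x k) + fill k.

Lemma fill_bounds k : lo <= fill k <= lo + 1.
Proof. by have := clip_bounds 0 (band_mass lo x - k%:R); rewrite /fill; lra. Qed.

Lemma sum_fill_prefix j : (j <= n)%N ->
  \sum_(k < n | (k < j)%N) (fill k - lo) = Num.min j%:R (band_mass lo x).
Proof.
move=> jn; under eq_bigr do rewrite /fill addrC addKr.
rewrite -(big_ord_widen n (fun k => clip 0 (band_mass lo x - k%:R))) // sum_clip0 //.
by have /andP[] := band_mass_bounds lo x.
Qed.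

Lemma sum_fill : \sum_k (fill k - lo) = band_mass lo x.
Proof.
have /andP[_] := band_mass_bounds lo x; rewrite card_ord => /min_r <-.
by rewrite -sum_fill_prefix //; apply: eq_bigl => k; rewrite ltn_ord.
Qed.

Lemma refill_sum : \sum_k refill k = \sum_k x k.
Proof.
rewrite (eq_bigr (fun k => x k - (clip lo (x k) - lo) + (fill k - lo))) => [|k _].
  by rewrite big_split /= sumrB sum_fill subrK.
by rewrite /refill; lra.
Qed.

Hypothesis x_dec : nonincreasing x.

Lemma fill_above k : lo + 1 < x k -> fill k = lo + 1.
Proof.
move=> x_hi; have : (k.+1)%:R <= band_mass lo x.
  rewrite /band_mass (bigID (fun i : 'I_n => (i < k.+1)%N)) /= -[X in X <= _]addr0.
  rewrite lerD ?sumr_ge0 // => [|i _]; last by have := clip_bounds lo (x i); lra.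
  rewrite -[X in X <= _]mulr1 -sum_prefix_const //; apply: ler_sum => i ik.
  by have := x_dec ik; case: clipP; lra.
by rewrite /fill -natr1; case: clipP; lra.
Qed.

Lemma fill_below k : x k < lo -> fill k = lo.
Proof.
move=> x_lo; have : band_mass lo x <= k%:R.
  rewrite /band_mass (bigID (fun i : 'I_n => (i < k)%N)) /= [X in _ + X]big1 => [|i].
    rewrite addr0 -[X in _ <= X]mulr1 -sum_prefix_const 1?ltnW //.
    by apply: ler_sum => i _; have := clip_bounds lo (x i); lra.
  by rewrite -leqNgt => /x_dec; case: clipP; lra.
by rewrite /fill; case: clipP; lra.
Qed.

Lemma clip_refill k : clip lo (refill k) = fill k.
Proof.
rewrite /refill; case: (clipP lo (x k)) => [x_lo | x_hi | ? ?].
- by rewrite fill_below // subrK; case: clipP; lra.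
- by rewrite fill_above // subrK; case: clipP; lra.
- by rewrite subrr add0r clip_id // fill_bounds.
Qed.

Lemma refill_moves_within : moves_within lo x refill.
Proof.
move=> k; rewrite /refill; case: (clipP lo (x k)) => [x_lo | x_hi | ? ?].
- by left; rewrite fill_below // subrK.
- by left; rewrite fill_above // subrK.
- by right; rewrite subrr add0r fill_bounds; split=> //; apply/andP.
Qed.

Lemma band_packed_refill : band_packed lo refill.
Proof.
have mass : band_mass lo refill = band_mass lo x.
  by rewrite /band_mass; under eq_bigr do rewrite clip_refill; apply: sum_fill.
move=> t j; rewrite card_ord mass => jn; rewrite -sum_fill_prefix // -sum_prefix_const // -sumrB.
rewrite /band_excess [X in _ <= X](bigID (fun k : 'I_n => (k < j)%N)) /= -[X in X <= _]addr0.
rewrite lerD ?sumr_ge0 // => [|k _]; last exact: pos_ge0.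
by apply: ler_sum => k _; rewrite clip_refill; have := le_pos (fill k - t); lra.
Qed.

End Refill.

End CupGame.

Theorem lemma6p15 (R : realType) (n : nat) (x y y' : 'I_n -> R) :
  nonincreasing x -> nonincreasing y -> majorizes x y ->
  game_step y y' ->
  exists x' : 'I_n -> R, game_step x x' /\ majorizes x' y'.
Proof.
move=> x_dec _ /majorizesP[sum_xy dom] step.
have [lo yy'] := game_step_moves_toward step.
have xx' := refill_moves_within lo x_dec.
exists (refill lo x); split.
  exact: moves_within_game_step (game_step_dim_gt0 step) xx' (refill_sum lo x).
apply/majorizesP; split; first by rewrite refill_sum sum_xy (game_step_sum step).
exact: excess_le_moves yy' xx' (band_packed_refill lo x_dec)
  (game_step_sum step) (refill_sum lo x) sum_xy dom.
Qed.
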